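(* Consider the safety strategy-improvement algorithm described in the context, run on a concurrent game structure $G$ with safe set $F$. For $i\ge 0$, let $\gamma_i$ and $\gamma_{i+1}$ be the player-1 selectors obtained at iterations $i$ and $i+1$. If $\gamma_i\ne\gamma_{i+1}$, then (a) for all $s\in S$, $\mathrm{val}_1^{\overline{\gamma}_i}(\mathrm{Safe}(F))(s)\le\mathrm{val}_1^{\overline{\gamma}_{i+1}}(\mathrm{Safe}(F))(s)$; and (b) for some $s^*\in S$, $\mathrm{val}_1^{\overline{\gamma}_i}(\mathrm{Safe}(F))(s^* )<\mathrm{val}_1^{\overline{\gamma}_{i+1}}(\mathrm{Safe}(F))(s^* )$.
   Context: Concurrent game structure $G=(S,M,\Gamma_1,\Gamma_2,\delta)$: finite states $S$, finite moves $M$, nonempty move sets $\Gamma_i(s)\subseteq M$, $\delta(s,a_1,a_2)\in\mathrm{Distr}(S)$ (simultaneous independent moves); $\mathrm{Dest}(s,a_1,a_2)=\mathrm{supp}\,\delta(s,a_1,a_2)$. A state is absorbing if every move pair leads back to it with probability 1. A selector for player $i$ assigns to each state $s$ a distribution on $\Gamma_i(s)$ (a selector at $s$ is such a distribution); $\overline{\xi}$ is the memoryless strategy playing $\xi$ forever. $\mathrm{Safe}(F)$ is the set of plays that stay in $F$ forever; $\mathrm{val}_1^{\pi_1}(\mathrm{Safe}(F))(s)=\inf_{\pi_2}\Pr_s^{\pi_1,\pi_2}(\mathrm{Safe}(F))$, $\mathrm{val}_1(\mathrm{Safe}(F))=\sup_{\pi_1}\mathrm{val}_1^{\pi_1}(\mathrm{Safe}(F))$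 (over all strategies). For a valuation $v:S\to[0,1]$ and selectors: $\mathrm{Pre}_{\xi_1,\xi_2}(v)(s)=\sum_{a,b}\sum_t v(t)\delta(s,a,b)(t)\xi_1(s)(a)\xi_2(s)(b)$; $\mathrm{Pre}_{\xi_1,b}$ uses the point mass on move $b$ for player 2; $\mathrm{Pre}_{1:\xi_1}(v)(s)=\inf_{\xi_2}\mathrm{Pre}_{\xi_1,\xi_2}(v)(s)$; $\mathrm{Pre}_1(v)(s)=\sup_{\xi_1}\mathrm{Pre}_{1:\xi_1}(v)(s)$. Let $T=S\setminus F$ and $W_1=\{s:\mathrm{val}_1(\mathrm{Safe}(F))(s)=1\}$; standing assumption: all states of $W_1\cup T$ are absorbing. $\mathrm{OptSel}(v,s)=\{\xi_1\text{ selector at }s:\mathrm{Pre}_{1:\xi_1}(v)(s)=\mathrm{Pre}_1(v)(s)\}$; for $\xi_1\in\mathrm{OptSel}(v,s)$, $\mathrm{CountOpt}(v,s,\xi_1)=\{b\in\Gamma_2(s):\mathrm{Pre}_{\xi_1,b}(v)(s)=\mathrm{Pre}_1(v)(s)\}$; $\mathrm{OptSelCount}(v,s)$ is the set of pairs $(A,B)$ with $A\subseteq\Gamma_1(s)$, $B\subseteq\Gamma_2(s)$ such that some $\xi_1\in\mathrm{OptSel}(v,s)$ has support $A$ and $\mathrm{CountOpt}(v,s,\xi_1)=B$. Turn-based reduction $\mathrm{TB}(G,v,F)=(\overline{G}_v,\overline{F})$: a turn-based stochastic game (a graph whose states are partitioned into player-1 states, where player 1 picks the successor, player-2 states, where player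 2 picks, and random states, where the successor is drawn at random) with player-1 states $S$, player-2 states $(s,A,B)$ for $(A,B)\in\mathrm{OptSelCount}(v,s)$, random states $(s,A,b)$ for such $(A,B)$ and $b\in B$; edges $s\to(s,A,B)$, $(s,A,B)\to(s,A,b)$ for $b\in B$, and $(s,A,b)\to t$ for $t\in\bigcup_{a\in A}\mathrm{Dest}(s,a,b)$, random states choosing uniformly among successors. $\overline{F}=F\cup\{(s,A,B):s\in F\}\cup\{(s,A,b):s\in F\}$. The almost-sure winning states for $\mathrm{Safe}(\overline{F})$ are those from which player 1 has a strategy ensuring $\mathrm{Safe}(\overline{F})$ with probability 1 against all player-2 strategies. Algorithm: $\gamma_0=\xi^{\mathrm{unif}}$ (uniform over $\Gamma_1(s)$ at every $s$); $v_i=\mathrm{val}_1^{\overline{\gamma}_i}(\mathrm{Safe}(F))$. At iteration $i$: let $I=\{s\in S\setminus(W_1\cup T):\mathrm{Pre}_1(v_i)(s)>v_i(s)\}$. If $I\ne\emptyset$: take a selector $\xi_1$ with $\mathrm{Pre}_{1:\xi_1}(v_i)(s)=\mathrm{Pre}_1(v_i)(s)$ for $s\in I$ and let $\gamma_{i+1}=\xi_1$ on $I$, $=\gamma_i$ elsewhere. Otherwise: compute $(\overline{G}_{v_i},\overline{F})=\mathrm{TB}(G,v_i,F)$, the set $\overline{A}_i$ of almost-sure winning states for $\mathrm{Safe}(\overline{F})$ and a pure memoryless almost-sure winning strategy $\overline{\pi}_1$ from $\overline{A}_i$; let $U=(\overline{A}_i\cap S)\setminus W_1$; if $U\ne\emptyset$,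 let $\gamma_{i+1}=\gamma_i$ outside $U$ and, for $s\in U$ with $\overline{\pi}_1(s)=(s,A,B)$, let $\gamma_{i+1}(s)$ be a selector $\xi\in\mathrm{OptSel}(v_i,s)$ with support $A$ and $\mathrm{CountOpt}(v_i,s,\xi)=B$. The algorithm stops, returning $\overline{\gamma}_i$, when $I=\emptyset$ and $U=\emptyset$. *)

From HB Require Import structures.
From mathcomp Require Import all_boot all_order all_algebra.
From mathcomp Require Import boolp classical_sets reals.
Set Implicit Arguments. Unset Strict Implicit. Unset Printing Implicit Defensive.
Import Order.TTheory GRing.Theory Num.Theory.
Local Open Scope ring_scope.

Definition distr_on (R : realType) (T : finType) (A : {set T}) (d : T -> R) : Prop :=
  [/\ forall x, 0 <= d x, forall x, x \notin A -> d x = 0 & \sum_(x : T) d x = 1].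

Record cgs (R : realType) (S M : finType) := CGS {
  mov1 : S -> {set M};
  mov2 : S -> {set M};
  delta : S -> M -> M -> S -> R;
  mov1_nonempty : forall s, mov1 s != finset.set0;
  mov2_nonempty : forall s, mov2 s != finset.set0;
  delta_distr : forall s a b, distr_on (finset.setT) (delta s a b) }.

Section Concurrent.
Variables (R : realType) (S M : finType) (G : cgs R S M).

(* A (history-dependent, randomized) strategy: given the initial state s0
   and the subsequent states h of the history, a distribution on moves
   at the current state  last s0 h. *)
Definition strategy := S -> seq S -> M -> R.
Definition is_strat1 (p : strategy) := forall s0 h, distr_on (mov1 G (last s0 h)) (p s0 h).
Definition is_strat2 (p : strategy) := forall s0 h, distr_on (mov2 G (last s0 h)) (p s0 h).

Definition selector := S -> M -> R.
Definition is_sel1 (xi : selector) := forall s, distr_on (mov1 G s) (xi s).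
Definition mless (xi : selector) : strategy := fun s0 h => xi (last s0 h).

Fixpoint stay (F : {set S}) (p1 p2 : strategy) (n : nat) (s0 : S) (h : seq S) : R :=
  if last s0 h \in F then
    match n with
    | 0 => 1
    | n'.+1 => \sum_(a : M) \sum_(b : M) \sum_(t : S)
                 p1 s0 h a * p2 s0 h b * delta G (last s0 h) a b t
                 * stay F p1 p2 n' s0 (rcons h t)
    end
  else 0.

(* Pr_s^{p1,p2}(Safe(F)): the measure of the decreasing intersection of the
   cylinder events "first n steps in F" *)
Definition prSafe (F : {set S}) (p1 p2 : strategy) (s : S) : R :=
  inf (range (fun n => stay F p1 p2 n s [::])).

Definition val1_strat (F : {set S}) (p1 : strategy) (s : S) : R :=
  inf ([set r | exists2 p2, is_strat2 p2 & r = prSafe F p1 p2 s])%classic.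

Definition val1 (F : {set S}) (s : S) : R :=
  sup ([set r | exists2 p1, is_strat1 p1 & r = val1_strat F p1 s])%classic.

Definition val_sel (F : {set S}) (xi : selector) (s : S) : R :=
  val1_strat F (mless xi) s.

Definition W1 (F : {set S}) (s : S) : Prop := val1 F s = 1.

Definition absorbing (s : S) : Prop :=
  forall a b, a \in mov1 G s -> b \in mov2 G s -> delta G s a b s = 1.

Definition unif_sel : selector :=
  fun s a => if a \in mov1 G s then (#|mov1 G s|%:R)^-1 else 0.

Definition Pre2 (v : S -> R) (s : S) (x1 x2 : M -> R) : R :=
  \sum_(a : M) \sum_(b : M) \sum_(t : S) v t * delta G s a b t * x1 a * x2 b.

Definition ptmass (b : M) : M -> R := fun b' => if b' == b then 1 else 0.

Definition Pre1sel (v : S -> R) (s : S) (x1 : M -> R) : R :=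
  inf ([set r | exists2 x2, distr_on (mov2 G s) x2 & r = Pre2 v s x1 x2])%classic.

Definition Pre1 (v : S -> R) (s : S) : R :=
  sup ([set r | exists2 x1, distr_on (mov1 G s) x1 & r = Pre1sel v s x1])%classic.

Definition OptSel (v : S -> R) (s : S) (x1 : M -> R) : Prop :=
  distr_on (mov1 G s) x1 /\ Pre1sel v s x1 = Pre1 v s.

Definition CountOpt (v : S -> R) (s : S) (x1 : M -> R) : {set M} :=
  [set b in mov2 G s | Pre2 v s x1 (ptmass b) == Pre1 v s].

Definition supp (x1 : M -> R) : {set M} := [set a | x1 a != 0].

Definition OptSelCount (v : S -> R) (s : S) (A B : {set M}) : Prop :=
  exists x1, [/\ OptSel v s x1, supp x1 = A & CountOpt v s x1 = B].

End Concurrent.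

Inductive owner := Pl1 | Pl2 | Rnd.

Record tbgame (V : finType) := TBG { own : V -> owner; succ : V -> {set V} }.

Section TurnBased.
Variables (R : realType) (V : finType) (g : tbgame V).

Definition tstrategy := V -> seq V -> V -> R.
Definition is_tstrat (pl : owner) (p : tstrategy) :=
  forall v0 h, own g (last v0 h) = pl -> distr_on (succ g (last v0 h)) (p v0 h).

Definition ttrans (p1 p2 : tstrategy) (v0 : V) (h : seq V) (w : V) : R :=
  match own g (last v0 h) with
  | Pl1 => p1 v0 h w
  | Pl2 => p2 v0 h w
  | Rnd => if w \in succ g (last v0 h) then (#|succ g (last v0 h)|%:R)^-1 else 0
  end.

Fixpoint tstay (Fb : {set V}) (p1 p2 : tstrategy) (n : nat) (v0 : V) (h : seq V) : R :=
  if last v0 h \in Fb then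
    match n with
    | 0 => 1
    | n'.+1 => \sum_(w : V) ttrans p1 p2 v0 h w * tstay Fb p1 p2 n' v0 (rcons h w)
    end
  else 0.

Definition tprSafe (Fb : {set V}) (p1 p2 : tstrategy) (v : V) : R :=
  inf (range (fun n => tstay Fb p1 p2 n v [::])).

Definition as_win (Fb : {set V}) : set V :=
  (fun v => exists2 p1, is_tstrat Pl1 p1 &
           forall p2, is_tstrat Pl2 p2 -> tprSafe Fb p1 p2 v = 1).

Definition pm_strat (f : V -> V) : tstrategy :=
  fun v0 h w => if w == f (last v0 h) then 1 else 0.

Definition pm_as_winning (Fb : {set V}) (A : set V) (f : V -> V) : Prop :=
  (forall v, own g v = Pl1 -> f v \in succ g v) /\
  (forall v, A v -> forall p2, is_tstrat Pl2 p2 -> tprSafe Fb (pm_strat f) p2 v = 1).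

End TurnBased.

(* vertices: inl (inl s)           player-1 state s                    *)
(*           inl (inr (s, A, B))   player-2 state (s,A,B)              *)
(*           inr (s, A, b)         random state (s,A,b)                *)
(* Vertices (s,A,B) with (A,B) not in OptSelCount, etc., are junk:     *)
(* unreachable from valid vertices.                                    *)
Definition TBV (S M : finType) : finType :=
  ((S + (S * {set M} * {set M})) + (S * {set M} * M))%type.

Section Reduction.
Variables (R : realType) (S M : finType) (G : cgs R S M).

Definition tb_own (w : TBV S M) : owner :=
  match w with inl (inl _) => Pl1 | inl (inr _) => Pl2 | inr _ => Rnd end.

Definition tb_succ_raw (v : S -> R) (w : TBV S M) : {set TBV S M} :=
  match w with
  | inl (inl s) =>
      [set w' : TBV S M | match w' with
                          | inl (inr (s', A, B)) => (s' == s) && `[< OptSelCount G v s A B >]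
                          | _ => false end]
  | inl (inr (s, A, B)) =>
      [set w' : TBV S M | match w' with
                          | inr (s', A', b) => [&& s' == s, A' == A & b \in B]
                          | _ => false end]
  | inr (s, A, b) =>
      [set w' : TBV S M | match w' with
                          | inl (inl t) => [exists a in A, 0 < delta G s a b t]
                          | _ => false end]
  end.

(* a self-loop is added only at vertices that would otherwise be dead ends
   (this never happens at valid vertices) *)
Definition tb_succ (v : S -> R) (w : TBV S M) : {set TBV S M} :=
  if tb_succ_raw v w == finset.set0 then finset.set1 w else tb_succ_raw v w.

Definition TBgame (v : S -> R) : tbgame (TBV S M) := TBG tb_own (tb_succ v).

Definition TBsafe (F : {set S}) : {set TBV S M} :=
  [set w : TBV S M | match w with
                     | inl (inl s) => s \in F
                     | inl (inr (s, _, _)) => s \in F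
                     | inr (s, _, _) => s \in F end].

(* One iteration of the strategy-improvement algorithm: gam' is a     *)
(* possible gamma_{i+1} obtained from gam = gamma_i (the algorithm did *)
(* not stop at iteration i).                                          *)
Definition Iset (F : {set S}) (gam : selector R S M) (s : S) : Prop :=
  let v := val_sel G F gam in
  [/\ ~ W1 G F s, s \in F & v s < Pre1 G v s].

Definition alg_step (F : {set S}) (gam gam' : selector R S M) : Prop :=
  let v := val_sel G F gam in
  ((exists s, Iset F gam s) /\
     (forall s, Iset F gam s -> distr_on (mov1 G s) (gam' s) /\ Pre1sel G v s (gam' s) = Pre1 G v s) /\
     (forall s, ~ Iset F gam s -> gam' s = gam s))
  \/
  ((forall s, ~ Iset F gam s) /\
   exists f : TBV S M -> TBV S M,
     let Abar := as_win R (TBgame v) (TBsafe F) in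
     let U := fun s => Abar (inl (inl s)) /\ ~ W1 G F s in
     [/\ pm_as_winning R (TBgame v) (TBsafe F) Abar f,
         exists s, U s,
         forall s, ~ U s -> gam' s = gam s &
         forall s, U s ->
           match f (inl (inl s)) with
           | inl (inr (_, A, B)) =>
               [/\ OptSel G v s (gam' s), supp (gam' s) = A & CountOpt G v s (gam' s) = B]
           | _ => False
           end]).

End Reduction.

(* Write v for the value of the memoryless strategy of gamma_i.  Playing
   gamma_i one step and then continuing optimally shows v <= Pre_{gamma_i}(v)
   on F.  Conversely, any w : S -> [0,1] that vanishes outside F and
   satisfies w <= Pre_{xi}(w) on F is a lower bound for the value of the
   memoryless strategy of xi, since this inequality propagates along every
   finite horizon.  It thus suffices to exhibit, for xi = gamma_{i+1}, such a
   w with v <= w and v < w somewhere.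
   If gamma_{i+1} switches on the states of I, w raises v at one state of I
   by less than both the one-step gain and the headroom 1 - v.  Otherwise
   w = v + alpha (1 - v) on the set U, with alpha below every positive gap
   Pre_{gamma_{i+1},b}(v) - v.  Against a counter-optimal move b, every
   successor lies again in U or in W_1 (where v = 1), because the
   almost-sure winning region of the turn-based reduction is closed under
   the moves of the witnessing strategy; there w is the affine image
   (1 - alpha) v + alpha of v and Pre is affine.  Against any other move
   the gap absorbs the increase. *)
From Pilot Require Import Defs.
From HB Require Import structures.
From mathcomp Require Import all_boot all_order all_algebra.
From mathcomp Require Import boolp classical_sets reals.
From mathcomp Require Import ring.
Import Order.TTheory GRing.Theory Num.Theory.
Set Implicit Arguments. Unset Strict Implicit. Unset Printing Implicit Defensive.
Local Open Scope ring_scope.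

Section RealFacts.
Variable R : realType.

Lemma inf_le_of_lb (E : set R) c x : (forall y, E y -> c <= y) -> E x -> inf E <= x.
Proof. by move=> lb Ex; apply: ge_inf Ex; exists c. Qed.

Lemma le_inf_of_lb (E : set R) c : (exists x, E x) -> (forall y, E y -> c <= y) -> c <= inf E.
Proof. by move=> [x Ex] lb; apply: lb_le_inf; first exists x. Qed.

Lemma le_sup_of_ub (E : set R) c x : (forall y, E y -> y <= c) -> E x -> x <= sup E.
Proof. by move=> ub Ex; apply: ub_le_sup Ex; exists c. Qed.

Lemma sup_le_of_ub (E : set R) c : (exists x, E x) -> (forall y, E y -> y <= c) -> sup E <= c.
Proof. by move=> [x Ex] ub; apply: ge_sup; first exists x. Qed.

Lemma convex_sum_le (T : finType) (w f : T -> R) c :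
  (forall x, 0 <= w x) -> \sum_x w x = 1 -> (forall x, w x != 0 -> f x <= c) ->
  \sum_x w x * f x <= c.
Proof.
move=> w0 w1 fc; apply: (@le_trans _ _ (\sum_x w x * c)); last first.
  by rewrite -mulr_suml w1 mul1r.
apply: ler_sum => x _; have [->|/fc h] := eqVneq (w x) 0; first by rewrite !mul0r.
by rewrite ler_wpM2l.
Qed.

Lemma convex_sum_ge (T : finType) (w f : T -> R) c :
  (forall x, 0 <= w x) -> \sum_x w x = 1 -> (forall x, w x != 0 -> c <= f x) ->
  c <= \sum_x w x * f x.
Proof.
move=> w0 w1 fc; apply: (@le_trans _ _ (\sum_x w x * c)).
  by rewrite -mulr_suml w1 mul1r.
apply: ler_sum => x _; have [->|/fc h] := eqVneq (w x) 0; first by rewrite !mul0r.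
by rewrite ler_wpM2l.
Qed.

Lemma convex_sum_ge1 (T : finType) (w f : T -> R) x0 :
  (forall x, 0 <= w x) -> \sum_x w x = 1 -> (forall x, f x <= 1) ->
  1 <= \sum_x w x * f x -> 0 < w x0 -> 1 <= f x0.
Proof.
move=> w0 w1 f1 H wp.
have deficit : \sum_x w x * (1 - f x) <= 0.
  under eq_bigr => x _ do rewrite mulrBr mulr1.
  by rewrite sumrB w1 subr_le0.
have : w x0 * (1 - f x0) <= 0.
  apply: le_trans deficit; rewrite (bigD1 x0) //= lerDl.
  by apply: sumr_ge0 => x _; rewrite mulr_ge0 // subr_ge0.
by rewrite pmulr_rle0 // subr_le0.
Qed.

Lemma positive_values_lbound (T : finType) (h : T -> R) :
  exists2 e, 0 < e & forall x, 0 < h x -> e <= h x.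
Proof.
suff [e e0 He] : exists2 e, 0 < e & forall x, x \in enum T -> 0 < h x -> e <= h x.
  by exists e => // x; apply: He; rewrite mem_enum.
elim: (enum T) => [|y l [e e0 IH]]; first by exists 1.
have [hy|hy] := ltrP 0 (h y).
  exists (Num.min e (h y)); first by rewrite lt_min e0.
  move=> x; rewrite in_cons ge_min => /orP[/eqP -> _|xl hx]; first by rewrite lexx orbT.
  by rewrite IH.
exists e => // x; rewrite in_cons => /orP[/eqP -> hx|]; last exact: IH.
by move: hy; rewrite leNgt hx.
Qed.

Section Distributions.
Variables (T : finType) (A : {set T}) (d : T -> R).
Hypothesis dA : distr_on A d.

Lemma distr_ge0 x : 0 <= d x.
Proof. by case: dA. Qed.

Lemma distr_notin x : x \notin A -> d x = 0.
Proof. by case: dA => _ h _; exact: h. Qed.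

Lemma distr_sum1 : \sum_x d x = 1.
Proof. by case: dA. Qed.

Lemma distr_supp x : d x != 0 -> x \in A.
Proof. by apply: contraR => /distr_notin ->; rewrite eqxx. Qed.

End Distributions.

Lemma point_distr_on (T : finType) (A : {set T}) (b : T) : b \in A ->
  distr_on A (fun x => if x == b then (1:R) else 0).
Proof.
move=> bA; split.
- by move=> x; case: ifP.
- by move=> x xA; case: eqP => // e; move: xA; rewrite e bA.
- by rewrite (bigD1 b) //= eqxx big1 ?addr0 // => x /negbTE ->.
Qed.

Lemma sum_point_mass (T : finType) (b : T) (K : T -> R) :
  \sum_x (if x == b then (1:R) else 0) * K x = K b.
Proof. by rewrite (bigD1 b) //= eqxx mul1r big1 ?addr0 // => x /negbTE ->; rewrite mul0r. Qed.

Lemma uniform_distr_on (T : finType) (A : {set T}) : A != finset.set0 ->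
  distr_on A (fun x => if x \in A then (#|A|%:R)^-1 else (0:R)).
Proof.
move=> An0; split.
- by move=> x; case: ifP => // _; rewrite invr_ge0.
- by move=> x /negbTE ->.
- rewrite -big_mkcond /= sumr_const -[_ *+ _]mulr_natl mulfV //.
  by rewrite pnatr_eq0 -lt0n card_gt0.
Qed.

End RealFacts.

Section OneStep.
Variables (R : realType) (S M : finType) (G : cgs R S M).

Lemma delta_ge0 s a b t : 0 <= delta G s a b t.
Proof. exact: distr_ge0 (delta_distr G s a b) t. Qed.

Lemma delta_sum1 s a b : \sum_t delta G s a b t = 1.
Proof. exact: distr_sum1 (delta_distr G s a b). Qed.

Lemma delta_absorbing s a b t : delta G s a b s = 1 -> t != s -> delta G s a b t = 0.
Proof.
move=> E ts; have := delta_sum1 s a b; rewrite (bigD1 s) //= E => /eqP.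
rewrite -[X in _ == X]addr0 (inj_eq (addrI _)).
by move=> /eqP /(psumr_eq0P (fun x _ => delta_ge0 s a b x)); apply.
Qed.

Definition unif2 : strategy R S M := fun s0 h b =>
  if b \in mov2 G (last s0 h) then (#|mov2 G (last s0 h)|%:R)^-1 else 0.

Lemma unif2_strat2 : is_strat2 G unif2.
Proof. by move=> s0 h; exact: uniform_distr_on (mov2_nonempty G _). Qed.

Lemma unif_sel1 : is_sel1 G (unif_sel G).
Proof. by move=> s; exact: uniform_distr_on (mov1_nonempty G _). Qed.

Lemma mless_strat1 g : is_sel1 G g -> is_strat1 G (mless g).
Proof. by move=> h s0 hh; apply: h. Qed.

Lemma Pre2E v s x1 x2 : Pre2 G v s x1 x2 =
  \sum_a x1 a * \sum_b x2 b * \sum_t delta G s a b t * v t.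
Proof.
rewrite /Pre2; apply: eq_bigr => a _; rewrite mulr_sumr; apply: eq_bigr => b _.
by rewrite !mulr_sumr; apply: eq_bigr => t _; ring.
Qed.

Lemma ler_Pre2 f g s x1 x2 : (forall x, 0 <= x1 x) -> (forall x, 0 <= x2 x) ->
  (forall t, f t <= g t) -> Pre2 G f s x1 x2 <= Pre2 G g s x1 x2.
Proof.
move=> h1 h2 fg; rewrite !Pre2E; apply: ler_sum => a _; apply: ler_wpM2l => //.
apply: ler_sum => b _; apply: ler_wpM2l => //.
by apply: ler_sum => t _; apply: ler_wpM2l => //; apply: delta_ge0.
Qed.

Lemma Pre2_cst c s x1 x2 : \sum_a x1 a = 1 -> \sum_b x2 b = 1 ->
  Pre2 G (fun _ => c) s x1 x2 = c.
Proof.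
move=> h1 h2; rewrite Pre2E.
under eq_bigr => a _ do under eq_bigr => b _ do rewrite -mulr_suml delta_sum1 mul1r.
under eq_bigr => a _ do rewrite -mulr_suml h2 mul1r.
by rewrite -mulr_suml h1 mul1r.
Qed.

Lemma Pre2D f g s x1 x2 :
  Pre2 G (fun t => f t + g t) s x1 x2 = Pre2 G f s x1 x2 + Pre2 G g s x1 x2.
Proof.
rewrite /Pre2 -big_split; apply: eq_bigr => a _; rewrite -big_split.
by apply: eq_bigr => b _; rewrite -big_split; apply: eq_bigr => t _ /=; ring.
Qed.

Lemma Pre2Z k f s x1 x2 :
  Pre2 G (fun t => k * f t) s x1 x2 = k * Pre2 G f s x1 x2.
Proof.
rewrite /Pre2 mulr_sumr; apply: eq_bigr => a _; rewrite mulr_sumr.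
by apply: eq_bigr => b _; rewrite mulr_sumr; apply: eq_bigr => t _; ring.
Qed.

Lemma Pre2_ptmass v s x1 x2 :
  Pre2 G v s x1 x2 = \sum_b x2 b * Pre2 G v s x1 (ptmass R b).
Proof.
rewrite Pre2E; under [RHS]eq_bigr => b _ do rewrite Pre2E /ptmass.
under [RHS]eq_bigr => b _ do under eq_bigr => a _ do rewrite sum_point_mass.
under [RHS]eq_bigr => b _ do rewrite mulr_sumr.
rewrite exchange_big; apply: eq_bigr => a _; rewrite mulr_sumr.
by apply: eq_bigr => b _; ring.
Qed.

Lemma eq_Pre2_supp f g s x1 x2 :
  (forall a b t, x1 a != 0 -> x2 b != 0 -> delta G s a b t != 0 -> f t = g t) ->
  Pre2 G f s x1 x2 = Pre2 G g s x1 x2.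
Proof.
move=> fg; apply: eq_bigr => a _; apply: eq_bigr => b _; apply: eq_bigr => t _.
have [->|h1] := eqVneq (x1 a) 0; first by rewrite !(mulr0, mul0r).
have [->|h2] := eqVneq (x2 b) 0; first by rewrite !(mulr0, mul0r).
have [->|h3] := eqVneq (delta G s a b t) 0; first by rewrite !(mulr0, mul0r).
by rewrite (fg a b t).
Qed.

Lemma Pre2_ge0 f s x1 x2 : (forall x, 0 <= x1 x) -> (forall x, 0 <= x2 x) ->
  (forall t, 0 <= f t) -> 0 <= Pre2 G f s x1 x2.
Proof.
move=> h1 h2 hf; apply: sumr_ge0 => a _; apply: sumr_ge0 => b _.
by apply: sumr_ge0 => t _; rewrite !mulr_ge0 //; exact: delta_ge0.
Qed.

Lemma Pre1sel_le_Pre2 f s x1 x2 : (forall x, 0 <= x1 x) -> (forall t, 0 <= f t) ->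
  distr_on (mov2 G s) x2 -> Pre1sel G f s x1 <= Pre2 G f s x1 x2.
Proof.
move=> h1 hf D; apply: (inf_le_of_lb (c := 0)); last by exists x2.
by move=> y [x2' D' ->]; apply: Pre2_ge0 => //; exact: distr_ge0 D'.
Qed.

Lemma le_Pre1sel c f s x1 :
  (forall x2, distr_on (mov2 G s) x2 -> c <= Pre2 G f s x1 x2) -> c <= Pre1sel G f s x1.
Proof.
move=> H; apply: le_inf_of_lb => [|y [x2 D ->]]; last exact: H.
by exists (Pre2 G f s x1 (unif2 s [::])), (unif2 s [::]) => //; exact: unif2_strat2.
Qed.

Lemma ler_Pre1sel f g s x1 : (forall x, 0 <= x1 x) -> (forall t, 0 <= f t) ->
  (forall t, f t <= g t) -> Pre1sel G f s x1 <= Pre1sel G g s x1.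
Proof.
move=> h1 hf fg; apply: le_Pre1sel => x2 D.
apply: le_trans (Pre1sel_le_Pre2 h1 hf D) _.
by apply: ler_Pre2 => //; exact: distr_ge0 D.
Qed.

Lemma Pre1sel_le_Pre1 f s x1 : distr_on (mov1 G s) x1 -> (forall t, 0 <= f t <= 1) ->
  Pre1sel G f s x1 <= Pre1 G f s.
Proof.
move=> D1 hf; apply: (le_sup_of_ub (c := 1)); last by exists x1.
move=> y [x1' D' ->]; have D2 := unif2_strat2 s [::].
apply: le_trans (Pre1sel_le_Pre2 (distr_ge0 D') _ D2) _.
  by move=> t; case/andP: (hf t).
rewrite -(Pre2_cst 1 s (distr_sum1 D') (distr_sum1 D2)).
by apply: ler_Pre2 (distr_ge0 D') (distr_ge0 D2) _ => t; case/andP: (hf t).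
Qed.

End OneStep.

Section Stay.
Variables (R : realType) (S M : finType) (G : cgs R S M) (F : {set S}).

Lemma stay_notin p1 p2 n s0 h : last s0 h \notin F -> stay G F p1 p2 n s0 h = 0.
Proof. by move=> H; case: n => [|n] /=; rewrite (negbTE H). Qed.

Lemma stay0 p1 p2 s0 h : last s0 h \in F -> stay G F p1 p2 0 s0 h = 1.
Proof. by move=> H /=; rewrite H. Qed.

Lemma stayS p1 p2 n s0 h : last s0 h \in F ->
  stay G F p1 p2 n.+1 s0 h =
  Pre2 G (fun t => stay G F p1 p2 n s0 (rcons h t)) (last s0 h) (p1 s0 h) (p2 s0 h).
Proof.
move=> H /=; rewrite H /Pre2; apply: eq_bigr => a _; apply: eq_bigr => b _.
by apply: eq_bigr => t _; ring.
Qed.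

Definition shift_strat (s : S) (p : strategy R S M) : strategy R S M :=
  fun t0 h0 => p s (t0 :: h0).

Lemma stay_shift p1 p2 n s t h :
  stay G F p1 p2 n s (t :: h) = stay G F (shift_strat s p1) (shift_strat s p2) n t h.
Proof.
elim: n h => [|n IH] h //=; case: ifP => // _.
by apply: eq_bigr => a _; apply: eq_bigr => b _; apply: eq_bigr => x _; rewrite IH.
Qed.

Lemma eq_stay_at p1 p2 q1 q2 n t h :
  (forall h a, p1 t h a = q1 t h a) -> (forall h a, p2 t h a = q2 t h a) ->
  stay G F p1 p2 n t h = stay G F q1 q2 n t h.
Proof.
move=> E1 E2; elim: n h => [|n IH] h //=; case: ifP => // _.
apply: eq_bigr => a _; apply: eq_bigr => b _; apply: eq_bigr => x _.
by rewrite IH E1 E2.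
Qed.

Variables (p1 p2 : strategy R S M).
Hypotheses (V1 : is_strat1 G p1) (V2 : is_strat2 G p2).

Lemma stay_in01 n s0 h : 0 <= stay G F p1 p2 n s0 h <= 1.
Proof.
elim: n h => [|n IH] h; have [H|H] := boolP (last s0 h \in F);
  try by rewrite stay_notin // lexx ler01.
  by rewrite stay0 // lexx ler01.
have s1 := distr_sum1 (V1 s0 h); have s2 := distr_sum1 (V2 s0 h).
have le_Pre2 := ler_Pre2 G (last s0 h) (distr_ge0 (V1 s0 h)) (distr_ge0 (V2 s0 h)).
rewrite stayS //; apply/andP; split.
  by rewrite -(Pre2_cst G 0 (last s0 h) s1 s2); apply: le_Pre2 => t; case/andP: (IH (rcons h t)).
by rewrite -(Pre2_cst G 1 (last s0 h) s1 s2); apply: le_Pre2 => t; case/andP: (IH (rcons h t)).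
Qed.

Lemma stay_nonincr n m s0 h : (n <= m)%N -> stay G F p1 p2 m s0 h <= stay G F p1 p2 n s0 h.
Proof.
suff stay_geS k h' : stay G F p1 p2 k.+1 s0 h' <= stay G F p1 p2 k s0 h'.
  move/subnK <-; elim: (m - n)%N => [|k IH] //; rewrite addSn.
  exact: le_trans (stay_geS _ _) IH.
elim: k h' => [|k IH] h'; have [H|H] := boolP (last s0 h' \in F);
  try by rewrite !stay_notin.
  by rewrite stay0 //; case/andP: (stay_in01 1 s0 h').
rewrite !(stayS _ _ _ H).
by apply: ler_Pre2 (distr_ge0 (V1 s0 h')) (distr_ge0 (V2 s0 h')) _ => t.
Qed.

Lemma prSafe_le_stay n s : prSafe G F p1 p2 s <= stay G F p1 p2 n s [::].
Proof.
apply: (inf_le_of_lb (c := 0)); last by exists n.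
by move=> y [m _ <-]; case/andP: (stay_in01 m s [::]).
Qed.

Lemma le_prSafe c s : (forall n, c <= stay G F p1 p2 n s [::]) -> c <= prSafe G F p1 p2 s.
Proof.
move=> H; apply: le_inf_of_lb; first by exists (stay G F p1 p2 0 s [::]), 0%N.
by move=> y [m _ <-].
Qed.

Lemma prSafe_in01 s : 0 <= prSafe G F p1 p2 s <= 1.
Proof.
apply/andP; split; first by apply: le_prSafe => n; case/andP: (stay_in01 n s [::]).
by apply: le_trans (prSafe_le_stay 0 s) _; case/andP: (stay_in01 0 s [::]).
Qed.

End Stay.

Section Values.
Variables (R : realType) (S M : finType) (G : cgs R S M) (F : {set S}).

Lemma val_le_prSafe p1 p2 s : is_strat1 G p1 -> is_strat2 G p2 ->
  val1_strat G F p1 s <= prSafe G F p1 p2 s.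
Proof.
move=> V1 V2; apply: (inf_le_of_lb (c := 0)); last by exists p2.
by move=> y [q Vq ->]; case/andP: (prSafe_in01 F V1 Vq s).
Qed.

Lemma le_val c p1 s : (forall p2, is_strat2 G p2 -> c <= prSafe G F p1 p2 s) ->
  c <= val1_strat G F p1 s.
Proof.
move=> H; apply: le_inf_of_lb => [|y [q Vq ->]]; last exact: H.
by exists (prSafe G F p1 (unif2 G) s), (unif2 G) => //; exact: unif2_strat2.
Qed.

Lemma val_in01 p1 s : is_strat1 G p1 -> 0 <= val1_strat G F p1 s <= 1.
Proof.
move=> V1; have V2 := unif2_strat2 G; apply/andP; split.
  by apply: le_val => p2 V2'; case/andP: (prSafe_in01 F V1 V2' s).
by apply: le_trans (val_le_prSafe s V1 V2) _; case/andP: (prSafe_in01 F V1 V2 s).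
Qed.

Lemma val_notin p1 s : is_strat1 G p1 -> s \notin F -> val1_strat G F p1 s = 0.
Proof.
move=> V1 sF; have V2 := unif2_strat2 G.
apply/le_anti; rewrite (proj1 (andP (val_in01 s V1))) andbT.
apply: le_trans (val_le_prSafe s V1 V2) _.
by apply: le_trans (prSafe_le_stay F V1 V2 0 s) _; rewrite stay_notin.
Qed.

Lemma val_sel_ge0 g : is_sel1 G g -> forall t, 0 <= val_sel G F g t.
Proof. by move=> Vg t; case/andP: (val_in01 t (mless_strat1 Vg)). Qed.

Lemma val_sel_le1 g : is_sel1 G g -> forall t, val_sel G F g t <= 1.
Proof. by move=> Vg t; case/andP: (val_in01 t (mless_strat1 Vg)). Qed.

Lemma val1_nonempty s : exists x, [set r | exists2 p1, is_strat1 G p1 &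
  r = val1_strat G F p1 s]%classic x.
Proof.
by exists (val_sel G F (unif_sel G) s), (mless (unif_sel G)); first exact/mless_strat1/unif_sel1.
Qed.

Lemma val_sel_le_val1 g s : is_sel1 G g -> val_sel G F g s <= Defs.val1 G F s.
Proof.
move=> Vg; apply: (le_sup_of_ub (c := 1)); last by exists (mless g); first exact: mless_strat1.
by move=> y [p1 V1 ->]; case/andP: (val_in01 s V1).
Qed.

Lemma W1_safe s : W1 G F s -> s \in F.
Proof.
rewrite /W1 => W; apply/negPn/negP => sF.
suff : Defs.val1 G F s <= 0 by rewrite W ler10.
by apply: sup_le_of_ub (val1_nonempty s) _ => y [p1 V1 ->]; rewrite val_notin.
Qed.

Lemma val_sel_lt1 g s : is_sel1 G g -> ~ W1 G F s -> val_sel G F g s < 1.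
Proof.
move=> Vg nW; apply: le_lt_trans (val_sel_le_val1 s Vg) _.
rewrite lt_neqAle; apply/andP; split; first exact/eqP.
by apply: sup_le_of_ub (val1_nonempty s) _ => y [p1 V1 ->]; case/andP: (val_in01 s V1).
Qed.

Lemma val_sel_absorbing g t : is_sel1 G g -> absorbing G t -> t \in F -> val_sel G F g t = 1.
Proof.
move=> Vg At tF; have V1 := mless_strat1 Vg.
apply/le_anti; rewrite (proj2 (andP (val_in01 t V1))) /=.
apply: le_val => p2 V2; apply: le_prSafe => n.
suff -> : forall h, last t h = t -> stay G F (mless g) p2 n t h = 1 by [].
elim: n => [|n IH] h Ht; first by rewrite stay0 // Ht.
rewrite stayS ?Ht // -(Pre2_cst G 1 t (distr_sum1 (V1 t h)) (distr_sum1 (V2 t h))).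
apply: eq_Pre2_supp => a b t' ha hb hd; apply: IH; rewrite last_rcons.
apply/eqP; apply: contraR hd => ne; apply/eqP; apply: delta_absorbing ne.
by apply: At; rewrite -Ht; [exact: distr_supp (V1 t h) _ ha|exact: distr_supp (V2 t h) _ hb].
Qed.

(* Against a given first countermove x2, the opponent continues from each
   successor t with an eps-optimal strategy, cut at a common horizon N. *)
Lemma val_sel_le_Pre1sel g s : is_sel1 G g -> s \in F ->
  val_sel G F g s <= Pre1sel G (val_sel G F g) s (g s).
Proof.
move=> Vg sF; have V1 := mless_strat1 Vg; set v := val_sel G F g.
apply: le_Pre1sel => x2 D2; apply/ler_addgt0Pr => e e0.
have near_opt t : exists q : strategy R S M * nat,
    is_strat2 G q.1 /\ stay G F (mless g) q.1 q.2 t [::] < v t + e.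
  have : val1_strat G F (mless g) t < v t + e by rewrite ltrDl.
  case/inf_lt.
    by exists (prSafe G F (mless g) (unif2 G) t), (unif2 G); first exact: unif2_strat2.
  move=> y [q Vq ->]; case/inf_lt; first by exists (stay G F (mless g) q 0 t [::]), 0%N.
  by move=> z [m _ <-] hm; exists (q, m).
have [Q HQ] := choice near_opt.
pose N := (\max_t (Q t).2)%N.
pose p2 : strategy R S M := fun s0 h => match h with
  | [::] => if s0 == s then x2 else unif2 G s0 [::]
  | t :: h' => (Q t).1 t h' end.
have V2 : is_strat2 G p2.
  move=> s0 [|t h'] /=; last exact: (HQ t).1.
  by case: eqP => [->|_]; [exact: D2 | exact: unif2_strat2].
apply: le_trans (val_le_prSafe s V1 V2) _.
apply: le_trans (prSafe_le_stay F V1 V2 N.+1 s) _.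
rewrite stayS // /= eqxx.
apply: le_trans (ler_Pre2 (g := fun t => v t + e) G s (distr_ge0 (Vg s)) (distr_ge0 D2) _) _.
  move=> t; rewrite stay_shift (eq_stay_at G F (q1 := mless g) (q2 := (Q t).1)) //.
  apply: le_trans (stay_nonincr F V1 (HQ t).1 t [::] _) (ltW (HQ t).2).
  exact: (@leq_bigmax S (fun t => (Q t).2) t).
by rewrite Pre2D Pre2_cst // ?(distr_sum1 (Vg s)) ?(distr_sum1 D2).
Qed.

Lemma subfixpoint_le_val_sel g w : is_sel1 G g ->
  (forall t, 0 <= w t <= 1) -> (forall t, t \notin F -> w t = 0) ->
  (forall s, s \in F -> w s <= Pre1sel G w s (g s)) ->
  forall s, w s <= val_sel G F g s.
Proof.
move=> Vg w01 wout wpre s; have V1 := mless_strat1 Vg.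
have w0 t : 0 <= w t by case/andP: (w01 t).
apply: le_val => p2 V2; apply: le_prSafe => n.
suff: forall h, w (last s h) <= stay G F (mless g) p2 n s h by move/(_ [::]).
elim: n => [|n IH] h; have [H|H] := boolP (last s h \in F);
  try by rewrite stay_notin ?wout.
  by rewrite stay0 //; case/andP: (w01 (last s h)).
rewrite stayS //; apply: le_trans (wpre _ H) _.
apply: le_trans (Pre1sel_le_Pre2 (distr_ge0 (Vg _)) w0 (V2 s h)) _.
apply: ler_Pre2 (distr_ge0 (Vg _)) (distr_ge0 (V2 s h)) _ => t.
by have := IH (rcons h t); rewrite last_rcons.
Qed.

Lemma val_sel_improvement g g' w s0 : is_sel1 G g' ->
  (forall t, 0 <= w t <= 1) -> (forall t, t \notin F -> w t = 0) ->
  (forall s, s \in F -> w s <= Pre1sel G w s (g' s)) ->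
  (forall t, val_sel G F g t <= w t) -> val_sel G F g s0 < w s0 ->
  (forall s, val_sel G F g s <= val_sel G F g' s) /\
  (exists s, val_sel G F g s < val_sel G F g' s).
Proof.
move=> Vg' w01 wout wpre vw lt0; have w_le := subfixpoint_le_val_sel Vg' w01 wout wpre.
by split=> [s|]; [exact: le_trans (vw s) (w_le s)|exists s0; exact: lt_le_trans lt0 (w_le s0)].
Qed.

End Values.

Section TurnBasedPlays.
Variables (R : realType) (V : finType) (g : tbgame V) (Fb : {set V}).

Lemma tstay_notin (p1 p2 : tstrategy R V) n v0 h :
  last v0 h \notin Fb -> tstay g Fb p1 p2 n v0 h = 0.
Proof. by move=> H; case: n => [|n] /=; rewrite (negbTE H). Qed.

Lemma tstay0 (p1 p2 : tstrategy R V) v0 h : last v0 h \in Fb -> tstay g Fb p1 p2 0 v0 h = 1.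
Proof. by move=> H /=; rewrite H. Qed.

Lemma tstayS (p1 p2 : tstrategy R V) n v0 h : last v0 h \in Fb ->
  tstay g Fb p1 p2 n.+1 v0 h =
  \sum_w ttrans g p1 p2 v0 h w * tstay g Fb p1 p2 n v0 (rcons h w).
Proof. by move=> H /=; rewrite H. Qed.

Lemma tstay_forced x (p1 p2 : tstrategy R V) n v0 h : last v0 h \in Fb ->
  (forall w, ttrans g p1 p2 v0 h w = if w == x then 1 else 0) ->
  tstay g Fb p1 p2 n.+1 v0 h = tstay g Fb p1 p2 n v0 (rcons h x).
Proof.
move=> H forced; rewrite tstayS // -(sum_point_mass x (fun w => tstay g Fb p1 p2 n v0 (rcons h w))).
by apply: eq_bigr => w _; rewrite forced.
Qed.

Definition tshift_strat (v0 : V) (p : tstrategy R V) : tstrategy R V :=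
  fun w0 h0 => p v0 (w0 :: h0).

Lemma tstay_shift (p1 p2 : tstrategy R V) n v0 w h :
  tstay g Fb p1 p2 n v0 (w :: h) = tstay g Fb (tshift_strat v0 p1) (tshift_strat v0 p2) n w h.
Proof. by elim: n h => [|n IH] h //=; case: ifP => // _; apply: eq_bigr => x _; rewrite IH. Qed.

Lemma eq_tstay_at (p1 p2 q1 q2 : tstrategy R V) n w h :
  (forall h a, p1 w h a = q1 w h a) -> (forall h a, p2 w h a = q2 w h a) ->
  tstay g Fb p1 p2 n w h = tstay g Fb q1 q2 n w h.
Proof.
move=> E1 E2; elim: n h => [|n IH] h //=; case: ifP => // _.
apply: eq_bigr => x _; rewrite IH; congr (_ * _).
by rewrite /ttrans; case: (own g _); rewrite ?E1 ?E2.
Qed.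

Hypothesis succ_ne : forall w, succ g w != finset.set0.

Definition tunif : tstrategy R V := fun v0 h w =>
  if w \in succ g (last v0 h) then (#|succ g (last v0 h)|%:R)^-1 else 0.

Lemma tunif_tstrat pl : is_tstrat g pl tunif.
Proof. by move=> v0 h _; exact: uniform_distr_on. Qed.

Lemma ttrans_Rnd (p1 p2 : tstrategy R V) v0 h w :
  own g (last v0 h) = Rnd -> w \in succ g (last v0 h) -> 0 < ttrans g p1 p2 v0 h w.
Proof.
by rewrite /ttrans => -> ->; rewrite invr_gt0 ltr0n lt0n cards_eq0 succ_ne.
Qed.

Variables (p1 p2 : tstrategy R V).
Hypotheses (V1 : is_tstrat g Pl1 p1) (V2 : is_tstrat g Pl2 p2).

Lemma ttrans_ge0 v0 h w : 0 <= ttrans g p1 p2 v0 h w.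
Proof.
rewrite /ttrans; case E: (own g (last v0 h)).
- exact: distr_ge0 (V1 E) w.
- exact: distr_ge0 (V2 E) w.
- by case: ifP => // _; rewrite invr_ge0.
Qed.

Lemma ttrans_sum1 v0 h : \sum_w ttrans g p1 p2 v0 h w = 1.
Proof.
rewrite /ttrans; case E: (own g (last v0 h)).
- exact: distr_sum1 (V1 E).
- exact: distr_sum1 (V2 E).
- exact: distr_sum1 (uniform_distr_on R (succ_ne (last v0 h))).
Qed.

Lemma tstay_in01 n v0 h : 0 <= tstay g Fb p1 p2 n v0 h <= 1.
Proof.
elim: n h => [|n IH] h; have [H|H] := boolP (last v0 h \in Fb);
  try by rewrite tstay_notin // lexx ler01.
  by rewrite tstay0 // lexx ler01.
rewrite tstayS //; have w0 := ttrans_ge0 v0 h; have w1 := ttrans_sum1 v0 h.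
by rewrite convex_sum_ge ?convex_sum_le // => w _; case/andP: (IH (rcons h w)).
Qed.

Lemma tprSafe_le_tstay n v0 : tprSafe g Fb p1 p2 v0 <= tstay g Fb p1 p2 n v0 [::].
Proof.
apply: (inf_le_of_lb (c := 0)); last by exists n.
by move=> y [m _ <-]; case/andP: (tstay_in01 m v0 [::]).
Qed.

Lemma tprSafe_eq1 v0 : (forall n, 1 <= tstay g Fb p1 p2 n v0 [::]) -> tprSafe g Fb p1 p2 v0 = 1.
Proof.
move=> H; apply/le_anti/andP; split.
  by apply: le_trans (tprSafe_le_tstay 0 v0) _; case/andP: (tstay_in01 0 v0 [::]).
by apply: le_inf_of_lb; [exists (tstay g Fb p1 p2 0 v0 [::]), 0%N|move=> y [m _ <-]].
Qed.

End TurnBasedPlays.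

Section Reduction.
Variables (R : realType) (S M : finType) (G : cgs R S M) (v : S -> R) (F : {set S}).
Local Notation g := (TBgame G v).
Local Notation Fb := (TBsafe M F).
Local Notation V := (TBV S M).

Lemma tb_succ_ne w : succ g w != finset.set0.
Proof.
rewrite /= /tb_succ; case: ifP => [_|/negbT //].
by apply/set0Pn; exists w; exact: set11.
Qed.

Lemma mem_tb_succ w x : x \in tb_succ_raw G v w -> x \in succ g w.
Proof. by move=> H; rewrite /= /tb_succ; case: eqP => // E; move: H; rewrite E inE. Qed.

Lemma as_win_safe s : as_win R g Fb (inl (inl s)) -> s \in F.
Proof.
case=> p1 V1 W; have := W (tunif R g) (@tunif_tstrat R _ _ tb_succ_ne Pl2).
apply: contra_eqT => sF.
have Z n : tstay g Fb p1 (tunif R g) n (inl (inl s)) [::] = 0.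
  by rewrite tstay_notin //= inE.
suff : tprSafe g Fb p1 (tunif R g) (inl (inl s)) <= 0.
  by apply: contraL => /eqP ->; rewrite ler10.
by apply: (inf_le_of_lb (c := 0)) => [y [n _ <-]|]; [rewrite Z|exists 0%N; rewrite ?Z].
Qed.

Lemma tb_succ_Pl1 s s' A B : (inl (inr (s', A, B)) : V) \in succ g (inl (inl s)) -> s' = s.
Proof. by rewrite /= /tb_succ; case: ifP => _; rewrite inE // => /andP[/eqP]. Qed.

(* Player 2 first forces the random vertex (s,A,b) and then plays p2' as if
   the play had started at t; the winning strategy f must survive this too. *)
Lemma as_win_step (f : V -> V) s A B b a t :
  pm_as_winning R g Fb (as_win R g Fb) f -> as_win R g Fb (inl (inl s)) ->
  f (inl (inl s)) = inl (inr (s, A, B)) -> b \in B -> a \in A -> 0 < delta G s a b t ->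
  as_win R g Fb (inl (inl t)).
Proof.
move=> [fsucc fwin] Ws Ef bB aA dpos; have sF := as_win_safe Ws.
pose X : V := inl (inr (s, A, B)); pose Y : V := inr (s, A, b).
have tY : (inl (inl t) : V) \in succ g Y.
  by apply: mem_tb_succ; rewrite inE; apply/existsP; exists a; rewrite aA dpos.
have Vf : is_tstrat g Pl1 (pm_strat R f) by move=> v0 h E; apply: point_distr_on; exact: fsucc.
exists (pm_strat R f) => // p2' V2'.
pose p2 : tstrategy R V := fun v0 h => match h with
  | x1 :: x2 :: x3 :: h' => p2' x3 h'
  | [:: x1] => if x1 == X then (fun w => if w == Y then 1 else 0) else tunif R g v0 h
  | _ => tunif R g v0 h end.
have V2 : is_tstrat g Pl2 p2.
  have Vu := @tunif_tstrat R _ _ tb_succ_ne Pl2.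
  move=> v0 [|x1 [|x2 [|x3 h']]] E; rewrite /p2; try exact: Vu E.
    case: eqP => [Ex|_]; last exact: Vu E.
    by apply: point_distr_on; apply: mem_tb_succ; rewrite Ex inE /= !eqxx bB.
  exact: V2' x3 h' E.
have Vtu := ttrans_ge0 Vf V2; have Vts := ttrans_sum1 tb_succ_ne Vf V2.
apply: (tprSafe_eq1 tb_succ_ne Vf V2') => n.
have reach : 1 <= \sum_w ttrans g (pm_strat R f) p2 (inl (inl s)) [:: X; Y] w *
                         tstay g Fb (pm_strat R f) p2' n w [::].
  rewrite -(fwin _ Ws p2 V2); apply: le_trans (tprSafe_le_tstay Fb tb_succ_ne Vf V2 n.+3 _) _.
  rewrite (tstay_forced (x := X)) ?inE // => [|w]; last by rewrite /ttrans /= /pm_strat /= Ef.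
  rewrite (tstay_forced (x := Y)) ?inE // => [|w]; last by rewrite /ttrans /= eqxx.
  rewrite tstayS ?inE // le_eqVlt; apply/orP; left; apply/eqP/eq_bigr => w _; congr (_ * _).
  by rewrite /= !tstay_shift; apply: eq_tstay_at.
apply: (convex_sum_ge1 (f := fun w => tstay g Fb (pm_strat R f) p2' n w [::])
  (Vtu _ _) (Vts _ _) _ reach).
  by move=> w; case/andP: (tstay_in01 Fb tb_succ_ne Vf V2' n w [::]).
by apply: (ttrans_Rnd tb_succ_ne _ _ (v0 := inl (inl s)) (h := [:: X; Y])) tY.
Qed.

End Reduction.

Section LocalImprovement.
Variables (R : realType) (S M : finType) (G : cgs R S M) (F : {set S}).

Lemma val_sel_le_Pre1 g s : is_sel1 G g -> s \in F ->
  val_sel G F g s <= Pre1 G (val_sel G F g) s.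
Proof.
move=> Vg sF; apply: le_trans (val_sel_le_Pre1sel Vg sF) (Pre1sel_le_Pre1 (Vg s) _).
by move=> t; exact: val_in01 (mless_strat1 Vg).
Qed.

(* Raising v at s0 by beta keeps a subfixpoint as long as beta fits below both
   the one-step gain Pre1(v)(s0) - v(s0) and the headroom 1 - v(s0). *)
Lemma switch_improves g g' s0 : is_sel1 G g -> is_sel1 G g' -> Iset G F g s0 ->
  (forall s, Iset G F g s -> Pre1sel G (val_sel G F g) s (g' s) = Pre1 G (val_sel G F g) s) ->
  (forall s, ~ Iset G F g s -> g' s = g s) ->
  (forall s, val_sel G F g s <= val_sel G F g' s) /\
  (exists s, val_sel G F g s < val_sel G F g' s).
Proof.
move=> Vg Vg' Is0 HI Hn; set v := val_sel G F g.
have [nW s0F lt0] := Is0; have vlt1 := val_sel_lt1 Vg nW.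
pose beta := Num.min (Pre1 G v s0 - v s0) (1 - v s0).
have beta0 : 0 < beta by rewrite lt_min !subr_gt0 lt0 vlt1.
pose w t := if t == s0 then v t + beta else v t.
have vw t : v t <= w t by rewrite /w; case: eqP => // _; rewrite lerDl ltW.
apply: (val_sel_improvement (w := w) (s0 := s0)) => //.
- move=> t; rewrite /w; case: eqP => [->|_]; last by rewrite val_sel_ge0 ?val_sel_le1.
  by rewrite addr_ge0 ?(ltW beta0) ?val_sel_ge0 //= -lerBrDl ge_min lexx orbT.
- move=> t tF; rewrite /w; case: eqP => [E|_]; first by move: tF; rewrite E s0F.
  exact: val_notin (mless_strat1 Vg) tF.
- move=> s sF; apply: le_trans (ler_Pre1sel G s (distr_ge0 (Vg' s)) (val_sel_ge0 F Vg) vw).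
  rewrite /w; case: eqP => [->|ss0]; first by rewrite HI // -lerBrDl ge_min lexx.
  have [Is|nIs] := EM (Iset G F g s); first by rewrite HI //; case: Is => _ _ /ltW.
  by rewrite Hn //; exact: val_sel_le_Pre1sel.
- by rewrite /w eqxx ltrDl.
Qed.

End LocalImprovement.

Section TurnBasedImprovement.
Variables (R : realType) (S M : finType) (G : cgs R S M) (F : {set S}).
Variables (g g' : selector R S M) (f : TBV S M -> TBV S M) (al : R).
Hypotheses (absW1 : forall s, W1 G F s -> absorbing G s) (Vg : is_sel1 G g) (Vg' : is_sel1 G g').

Local Notation v := (val_sel G F g).
Local Notation win := (as_win R (TBgame G v) (TBsafe M F)).

Definition improvable s := win (inl (inl s)) /\ ~ W1 G F s.

Hypothesis f_win : pm_as_winning R (TBgame G v) (TBsafe M F) win f.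
Hypothesis g'_out : forall s, ~ improvable s -> g' s = g s.
Hypothesis g'_in : forall s, improvable s ->
  match f (inl (inl s)) with
  | inl (inr (_, A, B)) => [/\ OptSel G v s (g' s), supp (g' s) = A & CountOpt G v s (g' s) = B]
  | _ => False
  end.
Hypotheses (al0 : 0 < al) (al1 : al <= 1).
Hypothesis al_gap : forall s b, 0 < Pre2 G v s (g' s) (ptmass R b) - v s ->
  al <= Pre2 G v s (g' s) (ptmass R b) - v s.

Definition boost t := if `[< improvable t >] then v t + al * (1 - v t) else v t.

Lemma improvable_safe s : improvable s -> s \in F.
Proof. by case=> /as_win_safe. Qed.

Lemma boost_improvable t : improvable t -> boost t = v t + al * (1 - v t).
Proof. by move=> Ut; rewrite /boost asboolT. Qed.

Lemma boost_other t : ~ improvable t -> boost t = v t.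
Proof. by move=> Ut; rewrite /boost asboolF. Qed.

Lemma boost_win t : win (inl (inl t)) -> boost t = (1 - al) * v t + al.
Proof.
move=> Wt; have [W|nW] := EM (W1 G F t); last by rewrite boost_improvable; [ring|split].
have v1 : v t = 1 by exact: val_sel_absorbing Vg (absW1 W) (W1_safe W).
by rewrite /boost v1; case: asboolP => _; ring.
Qed.

Lemma le_boost t : v t <= boost t.
Proof.
have [Ut|Ut] := EM (improvable t); last by rewrite boost_other.
by rewrite boost_improvable // lerDl mulr_ge0 ?(ltW al0) // subr_ge0 (val_sel_le1 F Vg).
Qed.

Lemma boost01 t : 0 <= boost t <= 1.
Proof.
rewrite (le_trans (val_sel_ge0 F Vg t) (le_boost t)) /=.
have [Ut|Ut] := EM (improvable t); last by rewrite boost_other // (val_sel_le1 F Vg).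
by rewrite boost_improvable // -lerBrDl ler_piMl // subr_ge0 (val_sel_le1 F Vg).
Qed.

Lemma boost_notin t : t \notin F -> boost t = 0.
Proof.
move=> tF; rewrite boost_other; first exact: val_notin (mless_strat1 Vg) tF.
by move/improvable_safe; apply/negP.
Qed.

Lemma improvable_plan s : improvable s -> exists A B,
  [/\ f (inl (inl s)) = inl (inr (s, A, B)), OptSel G v s (g' s),
      supp (g' s) = A & CountOpt G v s (g' s) = B].
Proof.
move=> Us; move: (g'_in Us) (f_win.1 (inl (inl s)) erefl).
case E: (f (inl (inl s))) => [[?|[[s' A] B]]|?] //= [O SA CB] fs.
by rewrite (tb_succ_Pl1 fs); exists A, B.
Qed.

Lemma boost_le_Pre2_opt s b : improvable s -> b \in CountOpt G v s (g' s) ->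
  boost s <= Pre2 G boost s (g' s) (ptmass R b).
Proof.
move=> Us bB; have [A [B [Ef [D' _] SA CB]]] := improvable_plan Us.
have Pt : distr_on (mov2 G s) (ptmass R b).
  by apply: point_distr_on; move: bB; rewrite inE => /andP[].
rewrite (eq_Pre2_supp (g := fun t => (1 - al) * v t + al)); last first.
  move=> a b' t ha; rewrite /ptmass; have [-> _ hd|_] := eqVneq b' b; last by rewrite eqxx.
  have bB' : b \in B by rewrite -CB.
  have aA : a \in A by rewrite -SA inE.
  by apply: boost_win (as_win_step f_win Us.1 Ef bB' aA _); rewrite lt_def hd delta_ge0.
rewrite Pre2D Pre2Z Pre2_cst ?(distr_sum1 D') ?(distr_sum1 Pt) //.
move: bB; rewrite inE => /andP[_ /eqP ->].
rewrite boost_win ?lerD2r ?ler_wpM2l ?subr_ge0 ?val_sel_le_Pre1 ?improvable_safe //.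
exact: Us.1.
Qed.

Lemma boost_le_Pre2_subopt s b : improvable s -> b \in mov2 G s ->
  b \notin CountOpt G v s (g' s) -> boost s <= Pre2 G boost s (g' s) (ptmass R b).
Proof.
move=> Us bm bB; have [_ [_ [_ [D' O] _ _]]] := improvable_plan Us.
have Pt : distr_on (mov2 G s) (ptmass R b) by exact: point_distr_on.
have opt_le : Pre1 G v s <= Pre2 G v s (g' s) (ptmass R b).
  by rewrite -O; exact: Pre1sel_le_Pre2 (distr_ge0 D') (val_sel_ge0 F Vg) Pt.
have opt_ne : Pre2 G v s (g' s) (ptmass R b) != Pre1 G v s.
  by apply: contraNneq bB => E; rewrite inE bm E eqxx.
have gap0 : 0 < Pre2 G v s (g' s) (ptmass R b) - v s.
  rewrite subr_gt0; apply: le_lt_trans (val_sel_le_Pre1 Vg (improvable_safe Us)) _.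
  by rewrite lt_def opt_ne opt_le.
apply: le_trans (ler_Pre2 G s (distr_ge0 D') (distr_ge0 Pt) le_boost).
rewrite boost_improvable // -lerBrDl; apply: le_trans (al_gap gap0).
by rewrite ler_piMr ?(ltW al0) // gerBl (val_sel_ge0 F Vg).
Qed.

Lemma boost_subfixpoint s : s \in F -> boost s <= Pre1sel G boost s (g' s).
Proof.
move=> sF; have [Us|Us] := EM (improvable s).
  apply: le_Pre1sel => x2 D2; rewrite Pre2_ptmass.
  apply: convex_sum_ge (distr_ge0 D2) (distr_sum1 D2) _ => b /(distr_supp D2) bm.
  have [bB|bB] := boolP (b \in CountOpt G v s (g' s)).
    exact: boost_le_Pre2_opt.
  exact: boost_le_Pre2_subopt.
rewrite boost_other // g'_out //.
exact: le_trans (val_sel_le_Pre1sel Vg sF)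
  (ler_Pre1sel G s (distr_ge0 (Vg s)) (val_sel_ge0 F Vg) le_boost).
Qed.

Lemma boost_improves s0 : improvable s0 ->
  (forall s, v s <= val_sel G F g' s) /\ (exists s, v s < val_sel G F g' s).
Proof.
move=> Us0.
apply: (val_sel_improvement Vg' boost01 boost_notin boost_subfixpoint le_boost (s0 := s0)).
rewrite boost_improvable // ltrDl mulr_gt0 // subr_gt0.
by apply: val_sel_lt1 Vg _; case: Us0.
Qed.

End TurnBasedImprovement.

Section Algorithm.
Variables (R : realType) (S M : finType) (G : cgs R S M) (F : {set S}).

Lemma alg_step_sel1 g g' : is_sel1 G g -> alg_step G F g g' -> is_sel1 G g'.
Proof.
move=> Vg [[_ [HI Hn]]|[_ [f /= [_ _ Hn HU]]]] s.
  by have [Is|nIs] := EM (Iset G F g s); [exact: (HI s Is).1|rewrite Hn //; exact: Vg].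
have [Us|nUs] := EM (as_win R (TBgame G (val_sel G F g)) (TBsafe M F) (inl (inl s)) /\ ~ W1 G F s).
  by move: (HU s Us); case: (f _) => [[?|[[? ?] ?]]|?] // [[D _] _ _].
by rewrite Hn //; exact: Vg.
Qed.

Lemma alg_step_improves g g' : (forall s, W1 G F s -> absorbing G s) ->
  is_sel1 G g -> alg_step G F g g' ->
  (forall s, val_sel G F g s <= val_sel G F g' s) /\
  (exists s, val_sel G F g s < val_sel G F g' s).
Proof.
move=> absW1 Vg step; have Vg' := alg_step_sel1 Vg step.
case: step => [[[s0 Is0] [HI Hn]]|[_ [f /= [Hf [s0 Us0] Hn HU]]]].
  by apply: switch_improves Is0 _ Hn => // s /HI[].
pose gap p := Pre2 G (val_sel G F g) p.1 (g' p.1) (ptmass R p.2) - val_sel G F g p.1.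
have [eta eta0 Heta] := positive_values_lbound gap.
have al0 : 0 < Num.min eta 1 by rewrite lt_min eta0 ltr01.
apply: (boost_improves absW1 Vg Vg' Hf Hn HU al0 _ _ Us0).
  by rewrite ge_min lexx orbT.
by move=> s b /(Heta (s, b)); apply: le_trans; rewrite ge_min lexx.
Qed.

End Algorithm.

Theorem theorem6 (R : realType) (S M : finType) (G : cgs R S M) (F : {set S})
    (gam : nat -> selector R S M) (i : nat) :
  (forall s, W1 G F s \/ s \notin F -> absorbing G s) ->
  gam 0%N = unif_sel G ->
  (forall k, (k <= i)%N -> alg_step G F (gam k) (gam k.+1)) ->
  gam i <> gam i.+1 ->
  (forall s, val_sel G F (gam i) s <= val_sel G F (gam i.+1) s) /\
  (exists s, val_sel G F (gam i) s < val_sel G F (gam i.+1) s).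
Proof.
(* Every step the algorithm takes is already a strict improvement. *)
move=> absorb gam0 steps _.
have sel1 k : (k <= i)%N -> is_sel1 G (gam k).
  elim: k => [|k IH] lek; first by rewrite gam0; exact: unif_sel1.
  exact: alg_step_sel1 (IH (ltnW lek)) (steps k (ltnW lek)).
apply: alg_step_improves (sel1 i (leqnn i)) (steps i (leqnn i)).
by move=> s W; apply: absorb; left.
Qed.
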